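(* Let $U:\mathbb R^m_{++}\to\mathbb R$ be concave and let $s^{opt}$ be a maximizer of $U$ over $B_s$. Let $w'\in W$ have weighted center $(x',y',s')$ and let $g'$ be a supergradient of $U$ at $s'$. Put $g'_w:=(Y')^{-1}g'$. Then $$(g'_w)^{\top}\bigl(S^{opt}y'-w'\bigr)\ \ge\ 0,$$ i.e. $S^{opt}y'$ lies in the half-space $\{w:(g'_w)^\top(w-w')\ge 0\}$.
   Context: Let $A\in\mathbb R^{m\times n}$ have full column rank $n\le m$ and $b\in\mathbb R^m$ be such that $\{x\in\mathbb R^n:Ax\le b\}$ is bounded with nonempty interior. For $w\in\mathbb R^m_{++}$ the weighted center of $w$ is the unique $(x,y,s)\in\mathbb R^n\times\mathbb R^m\times\mathbb R^m$ with $Ax+s=b$, $s>0$, $A^\top y=0$, $\mathrm{Diag}(s)y=w$; we call $s$ and $y$ its $s$-vector and $y$-vector. Capital letters denote diagonal matrices of the corresponding vectors ($Y=\mathrm{Diag}(y)$, $S^{opt}=\mathrm{Diag}(s^{opt})$, etc.). $W=\{w\in\mathbb R^m:w>0,\ e^\top w=1\}$ ($e$ the all-ones vector). A vector is a centric $s$-vector (resp. $y$-vector) if it is the $s$-vector (resp. $y$-vector) of the weighted center of some $w\in W$; $B_s$ is the set of centric $s$-vectors. A supergradient of a concave $U$ at $s^0$ is a vector $g$ with $U(s)\le U(s^0)+g^\top(s-s^0)$ for all $s$ in the domain. *)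

From HB Require Import structures.
From mathcomp Require Import all_boot all_order all_algebra.
Set Implicit Arguments. Unset Strict Implicit. Unset Printing Implicit Defensive.
Import Order.TTheory GRing.Theory Num.Theory.
Local Open Scope ring_scope.

Definition Diag (R : ringType) (m : nat) (v : 'cV[R]_m) : 'M[R]_m := diag_mx v^T.

Definition vle (R : realFieldType) (m : nat) (u v : 'cV[R]_m) : Prop :=
  forall i, u i 0 <= v i 0.
Definition vpos (R : realFieldType) (m : nat) (v : 'cV[R]_m) : Prop :=
  forall i, 0 < v i 0.

Definition standing (R : realFieldType) (m n : nat)
  (A : 'M[R]_(m, n)) (b : 'cV[R]_m) : Prop :=
  [/\ (n <= m)%N, \rank A = n,
      exists M : R, forall x : 'cV[R]_n, vle (A *m x) b -> forall j, `|x j 0| <= M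
    &
      exists x : 'cV[R]_n, forall i, (A *m x) i 0 < b i 0].

Definition weighted_center (R : realFieldType) (m n : nat)
  (A : 'M[R]_(m, n)) (b : 'cV[R]_m) (w : 'cV[R]_m)
  (x : 'cV[R]_n) (y s : 'cV[R]_m) : Prop :=
  [/\ A *m x + s = b, vpos s, A^T *m y = 0 & Diag s *m y = w].

Definition inW (R : realFieldType) (m : nat) (w : 'cV[R]_m) : Prop :=
  vpos w /\ \sum_i w i 0 = 1.

Definition centric_s (R : realFieldType) (m n : nat)
  (A : 'M[R]_(m, n)) (b : 'cV[R]_m) (s : 'cV[R]_m) : Prop :=
  exists w, inW w /\ exists x y, weighted_center A b w x y s.

(* U concave on R^m_{++} (U given as a total function, only its values on
   positive vectors matter) *)
Definition concave_pos (R : realFieldType) (m : nat) (U : 'cV[R]_m -> R) : Prop :=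
  forall s1 s2 : 'cV[R]_m, vpos s1 -> vpos s2 -> forall t : R, 0 <= t -> t <= 1 ->
    t * U s1 + (1 - t) * U s2 <= U (t *: s1 + (1 - t) *: s2).

Definition supergradient (R : realFieldType) (m : nat) (U : 'cV[R]_m -> R)
  (s0 g : 'cV[R]_m) : Prop :=
  forall s, vpos s -> U s <= U s0 + (g^T *m (s - s0)) 0 0.

From HB Require Import structures.
From mathcomp Require Import all_boot all_order all_algebra.
Import Order.TTheory GRing.Theory Num.Theory.
Local Open Scope ring_scope.

(* The s-vector s' of the weighted center of w' is itself centric,
   so maximality of s^opt gives U(s') <= U(s^opt); combined with the
   supergradient inequality U(s^opt) <= U(s') + g'^T (s^opt - s') this yields
   g'^T (s^opt - s') >= 0.  It remains to rewrite this quantity in the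
   w-coordinates: since S' y' = w', we have S^opt y' - w' = Y' (s^opt - s'),
   and Y' is invertible because y' = (S')^{-1} w' > 0, so
   (Y'^{-1} g')^T Y' (s^opt - s') = g'^T (s^opt - s'). *)

Section DiagonalMatrices.
Variables (R : fieldType) (m : nat).
Implicit Types (u v : 'cV[R]_m).

Lemma Diag_mulE u v i : (Diag u *m v) i 0 = u i 0 * v i 0.
Proof. by rewrite /Diag mul_diag_mx !mxE. Qed.

Lemma Diag_mulC u v : Diag u *m v = Diag v *m u.
Proof.
by apply/matrixP => i j; rewrite (ord1 j) !Diag_mulE mulrC.
Qed.

Lemma Diag_unitmx v : (forall i, v i 0 != 0) -> Diag v \in unitmx.
Proof.
move=> v_neq0; rewrite unitmxE unitfE /Diag det_diag prodf_seq_neq0.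
by apply/allP => i _ /=; rewrite mxE.
Qed.

Lemma Diag_tr v : (Diag v)^T = Diag v.
Proof. by rewrite /Diag tr_diag_mx. Qed.

Lemma invDiag_pairing v (g d : 'cV[R]_m) : Diag v \in unitmx ->
  (invmx (Diag v) *m g)^T *m (Diag v *m d) = g^T *m d.
Proof.
by move=> vU; rewrite trmx_mul trmx_inv Diag_tr -mulmxA mulKmx.
Qed.

End DiagonalMatrices.

Arguments Diag_mulC {R m}.

Section WeightedCenters.
Variables (R : realFieldType) (m n : nat).
Variables (A : 'M[R]_(m, n)) (b w : 'cV[R]_m).
Variables (x : 'cV[R]_n) (y s : 'cV[R]_m).
Hypothesis center : weighted_center A b w x y s.

Lemma weighted_center_ypos : vpos w -> vpos y.
Proof.
case: center => _ s_pos _ <- w_pos i.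
by have := w_pos i; rewrite Diag_mulE pmulr_rgt0.
Qed.

Lemma weighted_center_centric : inW w -> centric_s A b s.
Proof. by move=> wW; exists w; split => //; exists x, y. Qed.

Lemma weighted_center_shift (s1 : 'cV[R]_m) :
  Diag y *m (s1 - s) = Diag s1 *m y - w.
Proof.
case: center => _ _ _ <-.
by rewrite mulmxBr !(Diag_mulC y).
Qed.

End WeightedCenters.

Arguments weighted_center_ypos {R m n A b w x y s}.
Arguments weighted_center_centric {R m n A b w x y s}.
Arguments weighted_center_shift {R m n A b w x y s}.

Lemma supergradient_ascent (R : realFieldType) (m : nat) (U : 'cV[R]_m -> R)
  (s0 s g : 'cV[R]_m) :
  supergradient U s0 g -> vpos s -> U s0 <= U s ->
  0 <= (g^T *m (s - s0)) 0 0.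
Proof.
move=> super s_pos le_U; have := le_trans le_U (super s s_pos).
by rewrite -lerBlDl subrr.
Qed.

Theorem lemma3p2 (R : realFieldType) (m n : nat)
  (A : 'M[R]_(m, n)) (b : 'cV[R]_m)
  (U : 'cV[R]_m -> R) (sopt : 'cV[R]_m)
  (w' : 'cV[R]_m) (x' : 'cV[R]_n) (y' s' : 'cV[R]_m) (g' : 'cV[R]_m) :
  standing A b ->
  concave_pos U ->
  centric_s A b sopt ->
  (forall s, centric_s A b s -> U s <= U sopt) ->
  inW w' ->
  weighted_center A b w' x' y' s' ->
  supergradient U s' g' ->
  let g'w := invmx (Diag y') *m g' in
  0 <= (g'w^T *m (Diag sopt *m y' - w')) 0 0.
Proof.
move=> _ _ [w0 [_ [x0 [y0 [_ sopt_pos _ _]]]]] sopt_max w'W center super /=.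
have y'_pos : vpos y' := weighted_center_ypos center w'W.1.
have Y'_unit : Diag y' \in unitmx.
  by apply: Diag_unitmx => i; rewrite lt0r_neq0.
rewrite -(weighted_center_shift center) invDiag_pairing //.
apply: supergradient_ascent super sopt_pos _.
exact/sopt_max/(weighted_center_centric center).
Qed.
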